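(* Fix integers $n\ge m\ge 0$, an integer $N_T\ge 1$, and a target state $Q$, i.e. a nonzero homogeneous polynomial of degree $n-m$ in the $N_T$ variables $a^\dagger_1,\dots,a^\dagger_{N_T}$. Suppose the target $Q$ can be generated (in the sense defined in the context) from some $N$-mode Fock input with occupation numbers $(n_1,\dots,n_N)$, $\sum_i n_i=n$, heralded by some pattern $(m_1,\dots,m_M)$ on the last $M$ modes with $\sum_j m_j=m$ (where $N-M\ge N_T$). Then there exist an integer $N'$ and a number $M'$ of heralding modes such that $Q$ can also be generated from the $N'$-mode input with exactly one photon in each of the modes $1,\dots,n$ and vacuum in all other modes (i.e. the state $\prod_{i=1}^n a^\dagger_i|0\rangle$), heralded by a pattern in which each heralding mode that receives a photon receives exactly one, with $m$ photons in total, i.e. the pattern $(1,1,\dots,1)$ on $m$ heralding modes, any further heralding modes being heralded on vacuum. Consequently, if $Q$ cannot be generated from $\prod_{i=1}^n a^\dagger_i|0\rangle$ with the single-photon heralding pattern $(1,\dots,1)$ on $m$ modes (together with arbitrary vacuum heralding), then $Q$ cannot be generated from any $n$-photon multi-mode Fock input with any heralding pattern containing $m$ photons.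
   Context: Heralded linear-optical state generation model. Multi-mode states with a fixed photon number are represented as homogeneous polynomials in commuting variables $a^\dagger_1,\dots,a^\dagger_N$ (creation operators) applied to the vacuum $|0\rangle$. Given $N$ modes, an arbitrary complex $N\times N$ matrix $A$ (not required to be unitary; unitarity can be recovered by rescaling and embedding in a larger mode space), and a Fock input $\prod_{i=1}^N \frac{1}{\sqrt{n_i!}}(a^\dagger_{i,\mathrm{in}})^{n_i}|0\rangle$ with $n=\sum_i n_i$ photons, the output is $F(a^\dagger_1,\dots,a^\dagger_N)|0\rangle$ with $F=\prod_{i=1}^N\frac{1}{\sqrt{n_i!}}\big(\sum_{j=1}^N A_{i,j}a^\dagger_j\big)^{n_i}$. Heralding the last $M$ modes on the photon-number pattern $(m_1,\dots,m_M)$ (entries $\ge 0$; a $0$ entry means heralding on vacuum), $m=\sum_j m_j$, produces the unnormalised state $G(a^\dagger_1,\dots,a^\dagger_{N-M})|0\rangle$ with $G=\frac{1}{\prod_j m_j!}\,\frac{\partial^{m} F}{\partial (a^\dagger_{N-M+1})^{m_1}\cdots\partial (a^\dagger_{N})^{m_M}}\Big|_{a^\dagger_{N-M+1}=\cdots=a^\dagger_N=0}$. A target state $Q$ on $N_T\le N-M$ modes is regarded as a polynomial in $a^\dagger_1,\dots,a^\dagger_{N-M}$ (modes $N_T+1,\dots,N-M$ in vacuum). The target $Q$ can be generated from the given input and heralding pattern if there exist a complex $N\times N$ matrix $A$ and $\gamma\in\mathbb{C}$ with $\gamma G=Q$ as polynomials (this forces the heralding amplitude $1/\gamma$ to be nonzero).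 *)

From mathcomp Require Import all_boot all_algebra.
From mathcomp Require Import mpoly complex.
From mathcomp Require Import reals.

Set Implicit Arguments.
Unset Strict Implicit.
Unset Printing Implicit Defensive.

Import GRing.Theory Num.Theory.
Local Open Scope ring_scope.

Section LinearOpticsModel.
Variable C : numClosedFieldType.

Definition homog_deg {k : nat} (d : nat) (p : {mpoly C[k]}) : Prop :=
  forall mo, mo \in msupp p -> mdeg mo = d.

(* Output polynomial F for N modes, matrix A and Fock input occupation ns:
   F = prod_i 1/sqrt(n_i!) (sum_j A_ij a_j^dagger)^(n_i). *)
Definition out_poly (N : nat) (A : 'M[C]_N) (ns : 'I_N -> nat) : {mpoly C[N]} :=
  \prod_(i < N)
     ((sqrtC ((ns i)`!%:R : C))^-1
        *: (\sum_(j < N) A i j *: 'X_j) ^+ ns i).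

(* Modes are 'I_(K + M): the first K (lshift) are kept, the last M (rshift)
   are heralded.  Multi-index of the derivative d^{m_1}..d^{m_M}. *)
Definition herald_multinom (K M : nat) (ms : 'I_M -> nat) : 'X_{1..K + M} :=
  [multinom (match split i with inl _ => 0%N | inr j => ms j end)
    | i < K + M].

Definition herald_subst (K M : nat) : (K + M).-tuple {mpoly C[K]} :=
  [tuple (match split i with inl k => 'X_k | inr _ => 0 end) | i < K + M].

Definition herald_poly (K M : nat) (A : 'M[C]_(K + M))
    (ns : 'I_(K + M) -> nat) (ms : 'I_M -> nat) : {mpoly C[K]} :=
  (\prod_(j < M) ((ms j)`!%:R : C))^-1
    *: comp_mpoly (@herald_subst K M)
         (mderivm (@herald_multinom K M ms) (out_poly A ns)).

(* A target on NT modes regarded as a polynomial in K >= NT variables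
   (modes NT+1..K in vacuum). *)
Definition embed_target (NT K : nat) (Q : {mpoly C[NT]}) : {mpoly C[K]} :=
  comp_mpoly
    [tuple (match insub (nat_of_ord i) : option 'I_K with
            | Some k => 'X_k | None => 0 end) | i < NT] Q.

Definition generable (NT K M : nat) (Q : {mpoly C[NT]})
    (ns : 'I_(K + M) -> nat) (ms : 'I_M -> nat) : Prop :=
  (NT <= K)%N /\
  exists (A : 'M[C]_(K + M)) (gamma : C),
    gamma *: herald_poly A ns ms = embed_target K Q.

End LinearOpticsModel.

Definition single_photon_input (n N : nat) : 'I_N -> nat :=
  fun i => if (nat_of_ord i < n)%N then 1%N else 0%N.

Arguments single_photon_input n N i : clear implicits.

(* Up to normalisation, the output polynomial is P(a) with
   P = prod_i (sum_j A_ij a_j)^(n_i).  Give every heralded photon its own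
   heralding mode: the linear substitution T that fixes the kept modes and
   sends a heralded mode h to the sum of the new modes b_u with t_u = h (one
   for each of its m_h photons) turns P into P(Ta), and by the chain rule one
   first derivative in each b_u equals the m-fold derivative of P, since b_u
   enters only through a_(t_u).  The polynomial P(Ta) is a product of n linear
   forms, i.e. the output of a network fed with one photon in each of n modes,
   the row of a photon being the row of its original mode in A T.  Setting the
   heralding modes to vacuum commutes with T, so the two heralded states agree
   up to factorials, which are absorbed into gamma. *)

From mathcomp Require Import all_boot all_algebra.
From mathcomp Require Import mpoly complex.
From mathcomp Require Import reals.

Set Implicit Arguments.
Unset Strict Implicit.
Unset Printing Implicit Defensive.

Import GRing.Theory Num.Theory.
Local Open Scope ring_scope.

Section LinearSubstitution.
Variable R : comNzRingType.

Lemma mpoly_ring_ind n (P : {mpoly R[n]} -> Prop) :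
  (forall c, P c%:MP) -> (forall i, P 'X_i) ->
  (forall p q, P p -> P q -> P (p + q)) ->
  (forall p q, P p -> P q -> P (p * q)) -> forall p, P p.
Proof.
move=> PC PX PD PM p; rewrite (mpolyE p).
apply: (big_ind P) => [|//|m _]; first by rewrite -mpolyC0.
rewrite -mul_mpolyC; apply: (PM) => //; rewrite mpolyXE_id.
apply: (big_ind P) => [|//|i _]; first by rewrite -mpolyC1.
by elim: (m i) => [|k IHk]; rewrite ?expr0 -?mpolyC1 // exprS; apply: (PM).
Qed.

Lemma comp_mpolyA n k l (lq : n.-tuple {mpoly R[k]}) (lp : k.-tuple {mpoly R[l]})
    (p : {mpoly R[n]}) :
  (p \mPo lq) \mPo lp = p \mPo [tuple tnth lq i \mPo lp | i < n].
Proof.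
elim/mpoly_ring_ind: p => [c|i|p q Hp Hq|p q Hp Hq].
- by rewrite !comp_mpolyC.
- by rewrite !comp_mpolyXU -!tnth_nth tnth_mktuple.
- by rewrite !comp_mpolyD Hp Hq.
- by rewrite !rmorphM /= Hp Hq.
Qed.

Lemma mderivXU n (i j : 'I_n) : ('X_i : {mpoly R[n]})^`M(j) = (i == j)%:R.
Proof.
rewrite mderivX mnm1E; have [->|_] := eqP; last by rewrite scale0r.
suff -> : (U_(j) - U_(j) = 0)%MM by rewrite mpolyX0 scale1r.
by apply/mnmP=> a; rewrite !mnmE subnn.
Qed.

Definition lform k N (A : 'M[R]_(k, N)) (i : 'I_k) : {mpoly R[N]} :=
  \sum_(j < N) A i j *: 'X_j.

Definition lin_subst N N' (T : 'M[R]_(N, N')) : N.-tuple {mpoly R[N']} :=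
  [tuple lform T i | i < N].

Lemma comp_lin_substX N N' (T : 'M[R]_(N, N')) i :
  'X_i \mPo lin_subst T = lform T i.
Proof. by rewrite comp_mpolyXU -tnth_nth tnth_mktuple. Qed.

Lemma lform_comp_lin_subst k N N' (A : 'M[R]_(k, N)) (T : 'M[R]_(N, N')) i :
  lform A i \mPo lin_subst T = lform (A *m T) i.
Proof.
rewrite raddf_sum /=.
under eq_bigr do rewrite comp_mpolyZ comp_lin_substX scaler_sumr.
rewrite exchange_big; apply: eq_bigr => j _; rewrite mxE scaler_suml.
by apply: eq_bigr => a _; rewrite scalerA.
Qed.

Lemma mderiv_lin_subst N N' (T : 'M[R]_(N, N')) j p :
  (p \mPo lin_subst T)^`M(j) = \sum_(a < N) T a j *: (p^`M(a) \mPo lin_subst T).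
Proof.
elim/mpoly_ring_ind: p => [c|i|p q Hp Hq|p q Hp Hq].
- by rewrite comp_mpolyC mderivC big1 // => a _; rewrite mderivC comp_mpoly0 scaler0.
- rewrite comp_lin_substX (bigD1 i) //= big1 => [|a /negbTE ai]; last first.
    by rewrite mderivXU eq_sym ai comp_mpoly0 scaler0.
  rewrite mderivXU eqxx comp_mpoly1 addr0 raddf_sum (bigD1 j) //=.
  rewrite big1 => [|j' /negbTE j'j]; last by rewrite mderivZ mderivXU j'j scaler0.
  by rewrite mderivZ mderivXU eqxx addr0.
- rewrite !comp_mpolyD mderivD Hp Hq -big_split /=.
  by apply: eq_bigr => a _; rewrite mderivD comp_mpolyD scalerDr.
- rewrite rmorphM mderivM Hp Hq mulr_suml mulr_sumr -big_split /=.
  apply: eq_bigr => a _; rewrite mderivM comp_mpolyD !rmorphM scalerDr.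
  by rewrite scalerAl scalerAr.
Qed.

Lemma mderiv_lin_subst_unit_col N N' (T : 'M[R]_(N, N')) j i :
  (forall a, T a j = (a == i)%:R) ->
  forall p, (p \mPo lin_subst T)^`M(j) = p^`M(i) \mPo lin_subst T.
Proof.
move=> Tji p; rewrite mderiv_lin_subst (bigD1 i) //= Tji eqxx scale1r.
by rewrite big1 ?addr0 // => a /negbTE ai; rewrite Tji ai scale0r.
Qed.

Lemma mderivm_lin_subst_unit_cols N N' (T : 'M[R]_(N, N')) (I : Type)
    (r : seq I) (f : I -> 'I_N') (g : I -> 'I_N) :
  (forall x a, T a (f x) = (a == g x)%:R) ->
  forall p, (p \mPo lin_subst T)^`M[(\sum_(x <- r) U_(f x))%MM]
            = p^`M[(\sum_(x <- r) U_(g x))%MM] \mPo lin_subst T.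
Proof.
move=> Tfg; elim: r => [|x r IHr] p; first by rewrite !big_nil !mderivm0m.
rewrite !big_cons !mderivmDm !mderivmU1m.
by rewrite (mderiv_lin_subst_unit_col (Tfg x)) IHr.
Qed.

Definition select_mx N (s : seq 'I_N) : 'M[R]_(N, size s) :=
  \matrix_(a, u) (a == tnth (in_tuple s) u)%:R.

Definition photon_mx N N' (B : 'M[R]_(N, N')) (s : seq 'I_N) : 'M[R]_N' :=
  \matrix_(i, j) if insub (val i) is Some u then B (tnth (in_tuple s) u) j else 0.

Lemma lform_photon_mx N N' (B : 'M[R]_(N, N')) (s : seq 'I_N)
    (le_sN' : (size s <= N')%N) (u : 'I_(size s)) :
  lform (photon_mx B s) (widen_ord le_sN' u) = lform B (tnth (in_tuple s) u).
Proof. by apply: eq_bigr => j _; rewrite mxE /= valK. Qed.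

End LinearSubstitution.

Section PhotonModes.
Variable I : finType.
Implicit Type f : I -> nat.

Definition photon_modes f : seq I := flatten [seq nseq (f a) a | a <- index_enum I].

Lemma size_photon_modes f : size (photon_modes f) = (\sum_a f a)%N.
Proof.
rewrite size_flatten /shape -map_comp sumnE big_map.
by apply: eq_bigr => a _; rewrite /= size_nseq.
Qed.

Lemma sum_photon_modes (V : nmodType) f (F : I -> V) :
  \sum_(x <- photon_modes f) F x = \sum_a F a *+ f a.
Proof.
by rewrite big_flatten big_map; apply: eq_bigr => a _; rewrite big_nseq iter_addr_0.
Qed.

Lemma prod_photon_modes (R : pzSemiRingType) f (F : I -> R) :
  \prod_(x <- photon_modes f) F x = \prod_a F a ^+ f a.
Proof.
by rewrite big_flatten big_map; apply: eq_bigr => a _; rewrite big_nseq iter_mulr_1.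
Qed.

End PhotonModes.

Lemma split_lshift m n (i : 'I_m) : split (lshift n i) = inl i.
Proof. exact: (unsplitK (inl i)). Qed.

Lemma split_rshift m n (j : 'I_n) : split (rshift m j) = inr j.
Proof. exact: (unsplitK (inr j)). Qed.

Section Heralding.
Variable C : numClosedFieldType.

Lemma out_polyE N (A : 'M[C]_N) (ns : 'I_N -> nat) :
  out_poly A ns = (\prod_a (sqrtC (ns a)`!%:R)^-1) *: \prod_a lform A a ^+ ns a.
Proof. exact: scaler_prod. Qed.

Lemma out_poly_single_photons N N' (B : 'M[C]_(N, N')) (s : seq 'I_N) :
  (size s <= N')%N ->
  out_poly (photon_mx B s) (single_photon_input (size s) N')
  = \prod_(x <- s) lform B x.
Proof.
move=> le_sN'; rewrite out_polyE big1 ?scale1r => [|i _]; last first.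
  by rewrite /single_photon_input; case: ifP; rewrite sqrtC1 invr1.
under eq_bigr => i _ do
  rewrite /single_photon_input (fun_if (GRing.exp _)) expr1 expr0.
rewrite -big_mkcond (big_ord_narrow le_sN') [RHS](big_tuple _ _ (in_tuple s)).
by apply: eq_bigr => u _; rewrite lform_photon_mx.
Qed.

Lemma comp_herald_subst_block K M M' (Aur : 'M[C]_(K, M')) (Adr : 'M[C]_(M, M')) p :
  (p \mPo lin_subst (block_mx 1%:M Aur 0 Adr)) \mPo herald_subst C K M'
  = p \mPo herald_subst C K M.
Proof.
rewrite comp_mpolyA; congr (p \mPo _); apply: eq_from_tnth => a.
rewrite !tnth_mktuple raddf_sum big_split_ord /=.
under eq_bigr do
  rewrite comp_mpolyZ comp_mpolyXU -tnth_nth tnth_mktuple split_lshift.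
rewrite [X in _ + X]big1 ?addr0 => [|j _]; last first.
  by rewrite comp_mpolyZ comp_mpolyXU -tnth_nth tnth_mktuple split_rshift scaler0.
case: (split_ordP a) => [k|h] ->.
  rewrite (bigD1 k) //= big1 ?addr0 => [|k' /negbTE k'k]; last first.
    by rewrite block_mxEul mxE eq_sym k'k scale0r.
  by rewrite block_mxEul mxE eqxx scale1r.
by rewrite big1 // => k _; rewrite block_mxEdl mxE scale0r.
Qed.

(* The new modes are the K kept modes, one heralding mode per heralded photon
   (the photons being listed in t), and n further heralding modes left in
   vacuum, which make room for n single-photon inputs. *)
Definition herald_split_mx K M n (t : seq 'I_M) : 'M[C]_(K + M, K + (size t + n)) :=
  block_mx 1%:M 0 0 (row_mx (select_mx C t) 0).

Lemma herald_split_mx_col K M n (t : seq 'I_M) (u : 'I_(size t)) a :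
  herald_split_mx K n t a (rshift K (lshift n u))
  = (a == rshift K (tnth (in_tuple t) u))%:R.
Proof.
case: (split_ordP a) => [k|h] ->; first by rewrite block_mxEur mxE eq_shift.
by rewrite block_mxEdr row_mxEl mxE eq_shift.
Qed.

Lemma herald_multinom_photon_modes K M (ms : 'I_M -> nat) :
  herald_multinom K ms
  = (\sum_(u < size (photon_modes ms))
       U_(rshift K (tnth (in_tuple (photon_modes ms)) u)))%MM.
Proof.
apply/mnmP => z; rewrite mnmE mnm_sumE.
under eq_bigr do rewrite mnm1E.
rewrite -(big_tuple _ _ _ xpredT (fun x => (rshift K x == z) : nat)) /=.
rewrite sum_photon_modes; case: (split_ordP z) => [k|h] ->.
  by rewrite big1 // => h' _; rewrite eq_shift mul0rn.
rewrite (bigD1 h) //= eq_shift eqxx big1 ?addr0 => [|h' /negbTE h'h]; last first.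
  by rewrite eq_shift h'h mul0rn.
by rewrite natn.
Qed.

Lemma sum_single_photon_input m n :
  (\sum_(j < m + n) single_photon_input m (m + n) j)%N = m.
Proof.
rewrite big_split_ord /= [X in (_ + X)%N]big1 => [|j _]; last first.
  by rewrite /single_photon_input /= ltnNge leq_addr.
rewrite addn0 /single_photon_input /= (eq_bigr (fun=> 1%N)) => [|u _]; last first.
  by rewrite ltn_ord.
by rewrite sum1_card card_ord.
Qed.

Lemma herald_multinom_single_photons K m n :
  herald_multinom K (single_photon_input m (m + n))
  = (\sum_(u < m) U_(rshift K (lshift n u)))%MM.
Proof.
apply/mnmP => z; rewrite mnmE mnm_sumE.
under eq_bigr do rewrite mnm1E.
case: (split_ordP z) => [k|j] ->.
  by rewrite big1 // => u _; rewrite eq_shift.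
rewrite /single_photon_input; case: (split_ordP j) => [u|v] -> /=.
  rewrite (bigD1 u) //= eq_shift eqxx big1 // => u' /negbTE u'u.
  by rewrite !eq_shift u'u.
by rewrite big1 // => u _; rewrite !eq_shift.
Qed.

Lemma herald_split_modes K M n (ms : 'I_M -> nat) (P : {mpoly C[K + M]}) :
  (P \mPo lin_subst (herald_split_mx K n (photon_modes ms)))^`M[herald_multinom K
      (single_photon_input (size (photon_modes ms)) (size (photon_modes ms) + n))]
    \mPo herald_subst C K (size (photon_modes ms) + n)
  = P^`M[herald_multinom K ms] \mPo herald_subst C K M.
Proof.
rewrite herald_multinom_single_photons herald_multinom_photon_modes.
rewrite (mderivm_lin_subst_unit_cols _ (@herald_split_mx_col K M n _)).
exact: comp_herald_subst_block.
Qed.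

Lemma herald_poly_single_photons K M (A : 'M[C]_(K + M)) ns ms :
  let s := photon_modes ns in let t := photon_modes ms in
  let T := herald_split_mx K (size s) t in
  herald_poly A ns ms
  = ((\prod_(j < M) ((ms j)`!%:R : C))^-1 * \prod_a (sqrtC (ns a)`!%:R)^-1)
    *: herald_poly (photon_mx (A *m T) s) (single_photon_input (size s) _)
                   (single_photon_input (size t) (size t + size s)).
Proof.
move=> s t T; have le_s : (size s <= K + (size t + size s))%N.
  exact: leq_trans (leq_addl _ _) (leq_addl _ _).
have out_T :
    \prod_(x <- s) lform (A *m T) x = (\prod_a lform A a ^+ ns a) \mPo lin_subst T.
  rewrite -prod_photon_modes rmorph_prod.
  by apply: eq_bigr => x _; rewrite /= lform_comp_lin_subst.
rewrite /herald_poly (out_poly_single_photons _ le_s) out_T herald_split_modes.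
rewrite [\prod_(j < size t + size s) _]big1 => [|j _]; last first.
  by rewrite /single_photon_input; case: ifP.
by rewrite invr1 scale1r out_polyE mderivmZ comp_mpolyZ scalerA.
Qed.

Lemma generable_single_photons NT K M (Q : {mpoly C[NT]}) (ns : 'I_(K + M) -> nat)
    (ms : 'I_M -> nat) :
  generable Q ns ms ->
  generable Q (single_photon_input (\sum_i ns i) (K + (\sum_j ms j + \sum_i ns i)))
              (single_photon_input (\sum_j ms j) (\sum_j ms j + \sum_i ns i)).
Proof.
case=> le_NT_K [A [gamma]]; rewrite herald_poly_single_photons scalerA => gen_Q.
by split=> //; rewrite -!size_photon_modes; do 2 eexists; exact: gen_Q.
Qed.

Lemma single_photon_reduction NT K M (Q : {mpoly C[NT]})
    (ns : 'I_(K + M) -> nat) (ms : 'I_M -> nat) :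
  generable Q ns ms ->
  exists K' M' (ms' : 'I_M' -> nat),
    [/\ (\sum_i ns i <= K' + M')%N, forall j, (ms' j <= 1)%N,
        (\sum_j ms' j)%N = (\sum_j ms j)%N
      & generable Q (single_photon_input (\sum_i ns i) (K' + M')) ms'].
Proof.
move/generable_single_photons => gen_Q.
exists K, (\sum_j ms j + \sum_i ns i)%N, (single_photon_input (\sum_j ms j) _).
split=> //.
- exact: leq_trans (leq_addl _ _) (leq_addl _ _).
- by move=> j; rewrite /single_photon_input; case: ifP.
- exact: sum_single_photon_input.
Qed.

End Heralding.


Theorem lemma1 (R : realType) (n m NT : nat) (Q : {mpoly R[i][NT]}) :
  (m <= n)%N -> (1 <= NT)%N -> Q != 0 -> homog_deg (n - m)%N Q ->
  (* main statement *)
  ((exists (K M : nat) (ns : 'I_(K + M) -> nat) (ms : 'I_M -> nat),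
       (\sum_(i < K + M) ns i)%N = n /\ (\sum_(j < M) ms j)%N = m /\
       generable Q ns ms) ->
   exists (K' M' : nat) (ms' : 'I_M' -> nat),
     (n <= K' + M')%N /\ (forall j, ms' j <= 1)%N /\
     (\sum_(j < M') ms' j)%N = m /\
     generable Q (single_photon_input n (K' + M')) ms')
  /\
  (* consequence *)
  ((forall (K' M' : nat) (ms' : 'I_M' -> nat),
       (n <= K' + M')%N -> (forall j, ms' j <= 1)%N ->
       (\sum_(j < M') ms' j)%N = m ->
       ~ generable Q (single_photon_input n (K' + M')) ms') ->
   forall (K M : nat) (ns : 'I_(K + M) -> nat) (ms : 'I_M -> nat),
     (\sum_(i < K + M) ns i)%N = n -> (\sum_(j < M) ms j)%N = m ->
     ~ generable Q ns ms).
Proof.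
move=> _ _ _ _.
split=> [[K [M [ns [ms [<- [<- /single_photon_reduction]]]]]]
        | no_single K M ns ms sum_ns sum_ms].
  by case=> K' [M' [ms' [? ? ? ?]]]; exists K', M', ms'.
case/single_photon_reduction=> K' [M' [ms' []]].
by rewrite sum_ns sum_ms; exact: no_single.
Qed.
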